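(* The sequence $\left\{\dfrac{\exp(H_n)\log(H_n)}{n}\right\}_{n=1}^\infty$ is monotonically increasing.
   Context: $H_n=1+\frac12+\cdots+\frac1n$ is the $n$-th harmonic number. *)

From Stdlib Require Import Reals.
Open Scope R_scope.

Fixpoint H (n : nat) : R :=
  match n with
  | O => 0
  | S m => H m + / INR (S m)
  end.

Definition a (n : nat) : R := exp (H n) * ln (H n) / INR n.

(* Write h = H n, N = n and x = 1/(N+1), so that H (n+1) = h + x. After
   cancelling exp h, the claim reads (N+1) ln h < N exp(x) ln(h + x). Using
   exp x >= 1 + x = (N+2)/(N+1) and ln(h + x) - ln h >= x/(h + x) = 1/((N+1)h+1),
   together with N(N+2) + 1 = (N+1)^2, it suffices that
   ln h ((N+1)h + 1) < N(N+2). This follows from ln h <= h - 1 and the crude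
   estimate H n <= sqrt n + 1/2, proved from 1/(m+1) <= sqrt(m+1) - sqrt m. *)

From Stdlib Require Import Reals Lra Lia Psatz.
Open Scope R_scope.

Lemma ln_le_sub1 (y : R) : 0 < y -> ln y <= y - 1.
Proof.
  intros Hy. pose proof (exp_ineq1_le (ln y)) as Hexp.
  rewrite exp_ln in Hexp; lra.
Qed.

Lemma ln_add_sub_ge (h x : R) : 0 < h -> 0 < x -> x / (h + x) <= ln (h + x) - ln h.
Proof.
  intros Hh Hx.
  assert (Hq : 0 < h / (h + x)) by (apply Rdiv_lt_0_compat; lra).
  pose proof (ln_le_sub1 _ Hq) as Hln.
  unfold Rdiv in Hln.
  rewrite ln_mult, ln_Rinv in Hln by (try apply Rinv_0_lt_compat; lra).
  replace (h * / (h + x) - 1) with (- (x / (h + x))) in Hln by (field; lra).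
  lra.
Qed.

Lemma inv_succ_le_sqrt_succ_sub (m : R) :
  3 <= m -> / (m + 1) <= sqrt (m + 1) - sqrt m.
Proof.
  intros Hm.
  set (t := sqrt (m + 1)); set (u := sqrt m).
  assert (Ht : t * t = m + 1) by (apply sqrt_sqrt; lra).
  assert (Hu : u * u = m) by (apply sqrt_sqrt; lra).
  assert (0 <= u) by apply sqrt_pos.
  assert (Hut : u <= t) by (apply sqrt_le_1_alt; lra).
  assert (Ht2 : 2 <= t) by nra.
  assert (Hsum : t + u <= m + 1) by nra.
  assert (Hconj : (t - u) * (t + u) = 1) by nra.
  apply (Rmult_le_reg_r (m + 1)); [lra|].
  rewrite Rinv_l by lra. nra.
Qed.

Lemma sqrt_ge_of_sq_le (c y : R) : 0 <= c -> c * c <= y -> c <= sqrt y.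
Proof.
  intros Hc Hcy. rewrite <- (sqrt_square c Hc). apply sqrt_le_1_alt; lra.
Qed.

Lemma H_S (n : nat) : H (S n) = H n + / INR (S n).
Proof. reflexivity. Qed.

Lemma H_ge1 (n : nat) : (1 <= n)%nat -> 1 <= H n.
Proof.
  induction 1 as [|m _ IH].
  - simpl; lra.
  - rewrite H_S.
    assert (0 < / INR (S m)) by (apply Rinv_0_lt_compat, lt_0_INR; lia).
    lra.
Qed.

Lemma H_le_sqrt_add_half (n : nat) : (1 <= n)%nat -> H n <= sqrt (INR n) + / 2.
Proof.
  intros Hn.
  destruct n as [|[|[|n]]]; [lia| | |].
  - simpl. rewrite sqrt_1. lra.
  - assert (1.4 <= sqrt (INR 2)) by (apply sqrt_ge_of_sq_le; simpl; lra).
    simpl in *; lra.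
  - clear Hn. induction n as [|n IH].
    + assert (1.7 <= sqrt (INR 3)) by (apply sqrt_ge_of_sq_le; simpl; lra).
      simpl in *; lra.
    + rewrite H_S, (S_INR (S (S (S n)))).
      assert (Hm : 3 <= INR (S (S (S n)))) by
        (replace 3 with (INR 3) by (simpl; lra); apply le_INR; lia).
      pose proof (inv_succ_le_sqrt_succ_sub _ Hm). lra.
Qed.

Lemma ln_mul_affine_lt (N h : R) :
  0 <= N -> 1 <= h <= sqrt N + / 2 -> ln h * ((N + 1) * h + 1) < N * (N + 2).
Proof.
  intros HN [Hh1 Hh2].
  set (s := sqrt N) in Hh2.
  assert (Hss : s * s = N) by (apply sqrt_sqrt; lra).
  assert (0 <= s) by apply sqrt_pos.
  assert (Hln : ln h <= h - 1) by (apply ln_le_sub1; lra).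
  assert (Hpos : 0 < (N + 1) * h + 1) by nra.
  assert (Hbound : (h - 1) * ((N + 1) * h + 1) <= (s - / 2) * ((N + 1) * (s + / 2) + 1)).
  { apply Rmult_le_compat; try lra.
    assert ((N + 1) * h <= (N + 1) * (s + / 2)) by (apply Rmult_le_compat_l; lra).
    lra. }
  assert (Hexpand : (s - / 2) * ((N + 1) * (s + / 2) + 1) = (N + 1) * (N - / 4) + s - / 2)
    by (rewrite <- Hss; field).
  assert (Hs : s < 5 / 4 * N + 3 / 4) by nra.
  nra.
Qed.

Lemma ln_ge0 (h : R) : 1 <= h -> 0 <= ln h.
Proof.
  intros Hh. rewrite <- ln_1.
  destruct (Rle_lt_or_eq_dec 1 h Hh) as [Hlt | <-]; [|lra].
  apply Rlt_le, ln_increasing; lra.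
Qed.

Lemma sq_mul_ln_lt_ln_add_inv (N h : R) :
  0 < N -> 1 <= h -> ln h * ((N + 1) * h + 1) < N * (N + 2) ->
  (N + 1) * (N + 1) * ln h < N * (N + 2) * ln (h + / (N + 1)).
Proof.
  intros HN Hh Hkey.
  set (x := / (N + 1)).
  assert (0 < x) by (unfold x; apply Rinv_0_lt_compat; lra).
  set (L := ln h); set (d := x / (h + x)).
  assert (HL : 0 <= L) by (apply ln_ge0; exact Hh).
  assert (HLd : d <= ln (h + x) - L) by (apply ln_add_sub_ge; lra).
  assert (Hd : d * ((N + 1) * h + 1) = 1) by (unfold d, x; field; nra).
  assert (0 < d) by (unfold d; apply Rdiv_lt_0_compat; lra).
  assert (Hgain : L < N * (N + 2) * d).
  { replace L with (L * ((N + 1) * h + 1) * d) at 1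
      by (rewrite Rmult_assoc, (Rmult_comm _ d), Hd; ring).
    apply Rmult_lt_compat_r; assumption. }
  nra.
Qed.

Lemma exp_mul_ln_div_lt (N h : R) :
  0 < N -> 1 <= h -> ln h * ((N + 1) * h + 1) < N * (N + 2) ->
  exp h * ln h / N < exp (h + / (N + 1)) * ln (h + / (N + 1)) / (N + 1).
Proof.
  intros HN Hh Hkey.
  pose proof (sq_mul_ln_lt_ln_add_inv N h HN Hh Hkey) as Hln.
  set (x := / (N + 1)) in *.
  set (L := ln h) in *; set (L' := ln (h + x)) in *.
  assert (HL : 0 <= L) by (apply ln_ge0; exact Hh).
  assert (HL' : 0 < L') by nra.
  assert (Hexp : (1 + x) * L' <= exp x * L')
    by (apply Rmult_le_compat_r; [lra | apply exp_ineq1_le]).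
  assert (Hcore : (N + 1) * L < N * (exp x * L')).
  { assert (Hx : N * ((1 + x) * L') * (N + 1) = N * (N + 2) * L')
      by (unfold x; field; lra).
    nra. }
  rewrite exp_plus.
  pose proof (exp_pos h).
  apply (Rmult_lt_reg_r (N * (N + 1))); [nra|].
  replace (exp h * L / N * (N * (N + 1))) with (exp h * ((N + 1) * L)) by (field; lra).
  replace (exp h * exp x * L' / (N + 1) * (N * (N + 1))) with (exp h * (N * (exp x * L')))
    by (field; lra).
  apply Rmult_lt_compat_l; lra.
Qed.

Theorem mainTheorem18 : forall n : nat, (1 <= n)%nat -> a n < a (S n).
Proof.
  intros n Hn. unfold a.
  rewrite H_S, S_INR.
  assert (HN : 1 <= INR n) by (replace 1 with (INR 1) by reflexivity; apply le_INR; lia).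
  apply exp_mul_ln_div_lt; [lra | apply H_ge1; exact Hn |].
  apply ln_mul_affine_lt; [lra |].
  split; [apply H_ge1 | apply H_le_sqrt_add_half]; exact Hn.
Qed.
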